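(* Let $\{z_n\}_{n\ge 0}$ be a sequence of positive numbers satisfying the recurrence $$z_{n+1}=a_nz_{n}+b_nz_{n-1}\qquad (n\ge 1),$$ where $\{a_n\}$ and $\{b_n\}$ are real sequences. Assume that for all $n\geq 1$ we have $b_{n+1}\geq b_n>0$, $a_{n+1}\geq a_n>0$ and $$21a_n^2+11 a_{n+1}a_n-4b_{n-1}\geq0.$$ For each $n$ let $$f_n(x)=\left[(a_{n+1}a_n+b_{n+1})x+a_{n+1}b_n\right](x-a_{n-1})x^6-b_{n-1}(a_nx+b_n)^4.$$ If there exist a positive integer $N$ and a sequence $\{\lambda_n\}$ such that for all $n\geq N+1$, $$\frac{z_{n}}{z_{n-1}}\geq \lambda_n\geq a_n,\quad f_n''(\lambda_n)>0,\quad f_n'(\lambda_n)>0,\quad f_n(\lambda_n)>0,$$ then the ratio sequence $\{z_{n+1}/z_n\}_{n\ge N}$ is ratio log-convex.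
   Context: A sequence $\{x_n\}$ of positive numbers is log-convex if $x_{n-1}x_{n+1}\ge x_n^2$ for all indices $n$ for which the three terms are defined (i.e. all but the first index), and log-concave if $x_{n-1}x_{n+1}\le x_n^2$ for all such $n$. A sequence $\{x_n\}$ of positive numbers is called ratio log-convex (resp. ratio log-concave) if the sequence $\{x_{n+1}/x_n\}$ is log-convex (resp. log-concave). *)

From mathcomp Require Import all_boot all_order all_algebra.
Set Implicit Arguments. Unset Strict Implicit. Unset Printing Implicit Defensive.
Import Order.TTheory GRing.Theory Num.Theory.
Local Open Scope ring_scope.

Definition log_convex_from (R : realFieldType) (N : nat) (x : nat -> R) : Prop :=
  forall n : nat, (N < n)%N -> x n.-1 * x n.+1 >= x n ^+ 2.

Definition ratio_seq (R : realFieldType) (x : nat -> R) : nat -> R :=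
  fun n => x n.+1 / x n.

Definition ratio_log_convex_from (R : realFieldType) (N : nat) (x : nat -> R) : Prop :=
  log_convex_from N (ratio_seq x).

Definition fpoly (R : realFieldType) (a b : nat -> R) (n : nat) : {poly R} :=
  ((a n.+1 * a n + b n.+1) *: 'X + (a n.+1 * b n)%:P) * ('X - (a n.-1)%:P) * 'X^6
  - (b n.-1)%:P * ((a n) *: 'X + (b n)%:P) ^+ 4.

From mathcomp Require Import all_boot all_order all_algebra ring lra.
Import Order.TTheory GRing.Theory Num.Theory.
Local Open Scope ring_scope.
Set Implicit Arguments.
Unset Strict Implicit.

(* Put x := z_n / z_{n-1}.  Eliminating z_{n-2} and z_{n+2} with the recurrence gives
   b_{n-1} (z_{n-2} z_n^6 z_{n+2} - z_{n-1}^4 z_{n+1}^4) = z_{n-1}^8 f_n(x), and the sign of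
   the left-hand side is the sign of the log-convexity defect of the ratio of ratios.  So it
   suffices that f_n(x) > 0.  Since x >= lambda_n, expand f_n by Taylor's formula at lambda_n:
   the terms of order <= 2 are positive by hypothesis, and those of order 3..8 are nonnegative
   because the first part of f_n is (u + A h)(v + h)(lambda_n + h)^6 with u, v, A >= 0, while
   the subtracted quartic only contributes to orders 3 and 4, where it is dominated thanks to
   21 a_n^2 + 11 a_{n+1} a_n >= 4 b_{n-1} and the monotonicity of a and b. *)

Section TaylorCoefficients.
Variable R : realFieldType.
Implicit Types (A u v l d p q : R) (k : nat).

(* Coefficient of h^k, for 3 <= k <= 8, in (u + A h) (v + h) (l + h)^6. *)
Definition gcoef A u v l k : R :=
  match k with
  | 3 => 20 * u * v * l ^+ 3 + 15 * (u + A * v) * l ^+ 4 + 6 * A * l ^+ 5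
  | 4 => 15 * u * v * l ^+ 2 + 20 * (u + A * v) * l ^+ 3 + 15 * A * l ^+ 4
  | 5 => 6 * u * v * l + 15 * (u + A * v) * l ^+ 2 + 20 * A * l ^+ 3
  | 6 => u * v + 6 * (u + A * v) * l + 15 * A * l ^+ 2
  | 7 => u + A * v + 6 * A * l
  | 8 => A
  | _ => 0
  end.

(* Coefficient of h^k, for k >= 3, in d (p (l + h) + q)^4. *)
Definition dcoef d p q l k : R :=
  match k with
  | 3 => 4 * d * p ^+ 3 * (p * l + q)
  | 4 => d * p ^+ 4
  | _ => 0
  end.

Lemma gcoef_ge0 A u v l k :
  0 <= A -> 0 <= u -> 0 <= v -> 0 <= l -> 0 <= gcoef A u v l k.
Proof.
move=> A_ge0 u_ge0 v_ge0 l_ge0.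
by case: k => [|[|[|[|[|[|[|[|[|k]]]]]]]]] //=;
  rewrite ?(addr_ge0, mulr_ge0, exprn_ge0, ler0n).
Qed.

End TaylorCoefficients.

Section CoefficientBounds.
Variables (R : realFieldType) (a1 b1 c d p q l : R).
Local Notation A := (a1 * p + b1).
Local Notation u := (A * l + a1 * q).
Local Notation v := (l - c).

Lemma dcoef3_le_gcoef3 :
  0 < p -> p <= a1 -> c <= p -> 0 <= d -> d <= q -> q <= b1 ->
  4 * d <= 21 * p ^+ 2 + 11 * a1 * p -> p <= l ->
  dcoef d p q l 3 <= gcoef A u v l 3.
Proof.
move=> p_gt0 p_le_a1 c_le_p d_ge0 d_le_q q_le_b1 d_quad p_le_l.
have [l_ge0 a1_ge0 q_ge0 v_ge0] : [/\ 0 <= l, 0 <= a1, 0 <= q & 0 <= v] by split; lra.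
have A_ge0 : 0 <= A by rewrite addr_ge0 ?mulr_ge0 //; lra.
have u_ge0 : 0 <= u by rewrite addr_ge0 ?mulr_ge0.
have expp_le k : p ^+ k <= l ^+ k by rewrite lerXn2r ?nnegrE //; lra.
have : d * (p ^+ 4 * l) <= q * (a1 * l ^+ 4).
  apply: ler_pM; rewrite ?mulr_ge0 ?exprn_ge0 //; try lra.
  by rewrite [l ^+ 4]exprSr mulrA ler_wpM2r // exprS ler_pM ?exprn_ge0 //; lra.
have : 4 * d * (p ^+ 3 * q) <= (21 * p ^+ 2 + 11 * a1 * p) * (p ^+ 3 * q).
  by rewrite ler_wpM2r ?mulr_ge0 ?exprn_ge0 //; lra.
have : p ^+ 5 * q <= l ^+ 5 * q by rewrite ler_wpM2r.
have : a1 * p ^+ 4 * q <= a1 * l ^+ 4 * q by rewrite ler_wpM2r // ler_wpM2l.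
have : q * l ^+ 5 <= A * l ^+ 5 by rewrite ler_wpM2r ?exprn_ge0 //; nra.
have : 0 <= u * v * l ^+ 3 by rewrite !mulr_ge0 ?exprn_ge0.
have : 0 <= A * v * l ^+ 4 by rewrite !mulr_ge0 ?exprn_ge0.
rewrite /=; lra.
Qed.

Lemma dcoef_le_gcoef k :
  0 < p -> p <= a1 -> c <= p -> 0 <= d -> d <= q -> q <= b1 ->
  4 * d <= 21 * p ^+ 2 + 11 * a1 * p -> p <= l ->
  dcoef d p q l k <= gcoef A u v l k.
Proof.
move=> p_gt0 p_le_a1 c_le_p d_ge0 d_le_q q_le_b1 d_quad p_le_l.
have [l_ge0 a1_ge0 q_ge0 v_ge0] : [/\ 0 <= l, 0 <= a1, 0 <= q & 0 <= v] by split; lra.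
have A_ge0 : 0 <= A by rewrite addr_ge0 ?mulr_ge0 //; lra.
have u_ge0 : 0 <= u by rewrite addr_ge0 ?mulr_ge0.
case: k => [|[|[|[|[|k]]]]]; try exact: gcoef_ge0; first exact: dcoef3_le_gcoef3.
have : d * p ^+ 4 <= q * l ^+ 4.
  by rewrite ler_pM ?exprn_ge0 ?lerXn2r ?nnegrE //; lra.
have : q * l ^+ 4 <= A * l ^+ 4 by rewrite ler_wpM2r ?exprn_ge0 //; nra.
have : 0 <= A * l ^+ 4 by rewrite mulr_ge0 ?exprn_ge0.
have : 0 <= u * v * l ^+ 2 by rewrite !mulr_ge0 ?exprn_ge0.
have : 0 <= (u + A * v) * l ^+ 3 by rewrite mulr_ge0 ?exprn_ge0 ?addr_ge0 ?mulr_ge0.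
rewrite /=; lra.
Qed.

End CoefficientBounds.

Section TaylorExpansion.
Variables (R : realFieldType) (a b : nat -> R) (n : nat).
Local Notation f := (fpoly a b n).
Local Notation A := (a n.+1 * a n + b n.+1).

Lemma fpoly_taylor l h :
  2 * f.[l + h] = 2 * f.[l] + 2 * f^`().[l] * h + f^`(2).[l] * h ^+ 2
    + 2 * \sum_(3 <= k < 9)
            (gcoef A (A * l + a n.+1 * b n) (l - a n.-1) l k
             - dcoef (b n.-1) (a n) (b n) l k) * h ^+ k.
Proof.
rewrite /fpoly !derivnS derivn0.
rewrite !(deriv_exp, derivXn, derivMn, derivD, derivB, derivM, derivX, derivC, derivZ, derivN).
by rewrite !(hornerMn, hornerE) unlock /=; ring.
Qed.

Lemma fpoly_gt0_right l t :
  0 < a n -> a n <= a n.+1 -> a n.-1 <= a n ->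
  0 < b n.-1 -> b n.-1 <= b n -> b n <= b n.+1 ->
  4 * b n.-1 <= 21 * a n ^+ 2 + 11 * a n.+1 * a n -> a n <= l -> l <= t ->
  0 < f^`(2).[l] -> 0 < f^`().[l] -> 0 < f.[l] -> 0 < f.[t].
Proof.
move=> an_gt0 an_le an_pred_le bn_pred_gt0 bn_pred_le bn_le quad an_le_l l_le_t f2 f1 f0.
have h_ge0 : 0 <= t - l by rewrite subr_ge0.
have tail_ge0 : 0 <= \sum_(3 <= k < 9)
    (gcoef A (A * l + a n.+1 * b n) (l - a n.-1) l k
     - dcoef (b n.-1) (a n) (b n) l k) * (t - l) ^+ k.
  apply: sumr_ge0 => k _; rewrite mulr_ge0 ?exprn_ge0 // subr_ge0.
  by apply: dcoef_le_gcoef => //; exact: ltW.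
have := fpoly_taylor l (t - l); rewrite addrC subrK => taylor.
have : 0 <= f^`(2).[l] * (t - l) ^+ 2 by rewrite mulr_ge0 ?exprn_ge0 // ltW.
have : 0 <= f^`().[l] * (t - l) by rewrite mulr_ge0 // ltW.
lra.
Qed.

End TaylorExpansion.

Lemma fpoly_recurrence (R : realFieldType) (z a b : nat -> R) k :
  z k.+1 != 0 ->
  z k.+2 = a k.+1 * z k.+1 + b k.+1 * z k ->
  z k.+3 = a k.+2 * z k.+2 + b k.+2 * z k.+1 ->
  z k.+4 = a k.+3 * z k.+3 + b k.+3 * z k.+2 ->
  b k.+1 * (z k * z k.+2 ^+ 6 * z k.+4 - z k.+1 ^+ 4 * z k.+3 ^+ 4) =
  z k.+1 ^+ 8 * (fpoly a b k.+2).[z k.+2 / z k.+1].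
Proof.
move=> z1_neq0 rec2 rec3 rec4.
have bz : b k.+1 * z k = z k.+2 - a k.+1 * z k.+1 by rewrite rec2; ring.
rewrite mulrBr !mulrA bz rec4 rec3 /fpoly !hornerE /=.
by field.
Qed.

Lemma ratio_ratio_log_convex_at (R : realFieldType) (z : nat -> R) k :
  (forall i, 0 < z i) ->
  z k.+1 ^+ 4 * z k.+3 ^+ 4 <= z k * z k.+2 ^+ 6 * z k.+4 ->
  let y := ratio_seq (ratio_seq z) in y k.+1 ^+ 2 <= y k * y k.+2.
Proof.
move=> z_gt0 defect_ge0 /=; rewrite /ratio_seq -subr_ge0.
have z_ge0 i : 0 <= z i by exact: ltW.
have z_neq0 i : z i != 0 by rewrite gt_eqF.
have -> : z k.+2 / z k.+1 / (z k.+1 / z k) * (z k.+4 / z k.+3 / (z k.+3 / z k.+2))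
          - (z k.+3 / z k.+2 / (z k.+2 / z k.+1)) ^+ 2
        = (z k * z k.+2 ^+ 6 * z k.+4 - z k.+1 ^+ 4 * z k.+3 ^+ 4)
          / (z k.+1 ^+ 2 * z k.+2 ^+ 4 * z k.+3 ^+ 2) by field; rewrite ?z_neq0.
by rewrite divr_ge0 ?subr_ge0 ?mulr_ge0 ?exprn_ge0.
Qed.

Theorem theorem2p1 (R : realFieldType) (z a b lambda : nat -> R) (N : nat) :
  (forall n, 0 < z n) ->
  (forall n, (1 <= n)%N -> z n.+1 = a n * z n + b n * z n.-1) ->
  (forall n, (1 <= n)%N -> 0 < b n /\ b n <= b n.+1) ->
  (forall n, (1 <= n)%N -> 0 < a n /\ a n <= a n.+1) ->
  (forall n, (1 <= n)%N -> 0 <= 21 * a n ^+ 2 + 11 * a n.+1 * a n - 4 * b n.-1) ->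
  (0 < N)%N ->
  (forall n, (N < n)%N ->
     [/\ z n / z n.-1 >= lambda n, lambda n >= a n,
         (fpoly a b n)^`(2).[lambda n] > 0,
         (fpoly a b n)^`().[lambda n] > 0 &
         (fpoly a b n).[lambda n] > 0]) ->
  ratio_log_convex_from N (ratio_seq z).
Proof.
(* [0 < N] is not needed: all indices used below are at least 1. *)
move=> z_gt0 zrec b_mono a_mono quad _ lambdaP [//|k] /= N_lt_k1.
have [z_ge_lambda lambda_ge_a f2 f1 f0] := lambdaP k.+2 (ltnW N_lt_k1).
have [[a1_gt0 a1_le] [a2_gt0 a2_le]] := (a_mono k.+1 isT, a_mono k.+2 isT).
have [[b1_gt0 b1_le] [b2_gt0 b2_le]] := (b_mono k.+1 isT, b_mono k.+2 isT).
have quad2 : 4 * b k.+1 <= 21 * a k.+2 ^+ 2 + 11 * a k.+3 * a k.+2.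
  by rewrite -subr_ge0; exact: quad.
apply: ratio_ratio_log_convex_at => //; rewrite -subr_ge0 ltW //.
rewrite -(pmulr_rgt0 _ b1_gt0) (fpoly_recurrence (lt0r_neq0 (z_gt0 k.+1))
  (zrec k.+1 isT) (zrec k.+2 isT) (zrec k.+3 isT)).
rewrite mulr_gt0 ?exprn_gt0 //.
by apply: (fpoly_gt0_right (l := lambda k.+2)).
Qed.
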